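(* For any fuzzifying topological space $(X,\tau)$ and $A\subseteq X$, $T_2^P(X,\tau)\le T_2^P(A,\tau/A)$, i.e. $\vDash T_2^P(X,\tau)\to T_2^P(A,\tau/A)$.
   Context: A fuzzifying topology on $X$ is $\tau:P(X)\to[0,1]$ with $\tau(X)=1$, $\tau(A\cap B)\ge\min(\tau(A),\tau(B))$, $\tau(\bigcup A_\lambda)\ge\inf\tau(A_\lambda)$. $N_x(A)=\sup_{x\in B\subseteq A}\tau(B)$; $Cl(A)(x)=1-N_x(X\setminus A)$; for $\mu:X\to[0,1]$, $Int(\mu)(x)=\sup_{x\in B}\min(\tau(B),\inf_{y\in B}\mu(y))$; pre-open degrees $\tau_P(A)=\inf_{x\in A}Int(Cl(A))(x)$; $N^P_x(A)=\sup_{x\in B\subseteq A}\tau_P(B)$. $T_2^P(X,\tau)=\inf_{x,y\in X,x\ne y}\sup\{\min(N^P_x(U),N^P_y(V)):U,V\subseteq X,U\cap V=\emptyset\}$. For the subspace: $(\tau_P/A)(B)=\sup\{\tau_P(V):V\cap A=B\}$ for $B\subseteq A$, $N^{P^A}_x(U)=\sup_{x\in C\subseteq U}(\tau_P/A)(C)$, and $T_2^P(A,\tau/A)=\inf_{x,y\in A,x\ne y}\sup\{\min(N^{P^A}_x(U),N^{P^A}_y(V)):U,V\subseteq A,U\cap V=\emptyset\}$. *)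

From HB Require Import structures.
From mathcomp Require Import all_boot all_order all_algebra.
From mathcomp Require Import all_classical all_reals.
Set Implicit Arguments. Unset Strict Implicit. Unset Printing Implicit Defensive.
Import Order.TTheory GRing.Theory Num.Theory.
Local Open Scope classical_set_scope.
Local Open Scope ring_scope.

Section Fuzzy.
Variable R : realType.

(* Sup / inf in the complete lattice [0,1]: sup of the empty set is 0,
   inf of the empty set is 1 (all sets used below are subsets of [0,1]). *)
Definition fsup (E : set R) : R := sup (E `|` [set 0]).
Definition finf (E : set R) : R := inf (E `|` [set 1]).

Variable X : Type.

Definition fuzzifying_topology (tau : set X -> R) : Prop :=
  (forall A, 0 <= tau A <= 1) /\
  tau setT = 1 /\
  (forall A B, Num.min (tau A) (tau B) <= tau (A `&` B)) /\
  (forall F : set (set X),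
      finf [set tau A | A in F] <= tau (\bigcup_(A in F) A)).

Variable tau : set X -> R.

Definition nbhd (x : X) (A : set X) : R :=
  fsup [set tau B | B in [set B | B x /\ B `<=` A]].

Definition fcl (A : set X) (x : X) : R := 1 - nbhd x (~` A).

Definition fint (mu : X -> R) (x : X) : R :=
  fsup [set Num.min (tau B) (finf (mu @` B)) | B in [set B | B x]].

Definition preopen (A : set X) : R :=
  finf [set fint (fcl A) x | x in A].

Definition pnbhd (x : X) (A : set X) : R :=
  fsup [set preopen B | B in [set B | B x /\ B `<=` A]].

Definition T2P : R :=
  finf [set fsup [set Num.min (pnbhd xy.1 UV.1) (pnbhd xy.2 UV.2)
                  | UV in [set UV : set X * set X | UV.1 `&` UV.2 = set0]]
       | xy in [set xy : X * X | xy.1 <> xy.2]].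

Definition preopen_sub (A B : set X) : R :=
  fsup [set preopen V | V in [set V | V `&` A = B]].

Definition pnbhd_sub (A : set X) (x : X) (U : set X) : R :=
  fsup [set preopen_sub A C | C in [set C | C x /\ C `<=` U]].

Definition T2P_sub (A : set X) : R :=
  finf [set fsup [set Num.min (pnbhd_sub A xy.1 UV.1) (pnbhd_sub A xy.2 UV.2)
                  | UV in [set UV : set X * set X |
                           [/\ UV.1 `<=` A, UV.2 `<=` A & UV.1 `&` UV.2 = set0]]]
       | xy in [set xy : X * X | [/\ A xy.1, A xy.2 & xy.1 <> xy.2]]].

End Fuzzy.

From HB Require Import structures.
From mathcomp Require Import all_boot all_order all_algebra.
From mathcomp Require Import all_classical all_reals.
Import Order.TTheory GRing.Theory Num.Theory.
Local Open Scope classical_set_scope.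
Local Open Scope ring_scope.

(* Restricting to [A] can only raise pre-neighbourhood degrees: a pre-open [B]
   around [x] yields the subspace pre-open set [B `&` A] with degree at least
   [preopen B].  So any pair of disjoint pre-neighbourhoods [U, V] of two
   points of [A] in [X] gives the disjoint pre-neighbourhoods [U `&` A] and
   [V `&` A] in [A] with at least the same degrees, and the infimum over pairs
   of points of [A] ranges over fewer pairs than the one over [X].  None of
   the axioms of a fuzzifying topology is needed. *)

Section FuzzySupInf.
Variable R : realType.
Implicit Types E F : set R.

Lemma fsup_ge0 E : 0 <= fsup E.
Proof.
rewrite /fsup; case: (pselect (has_ubound (E `|` [set 0]))) => h.
  by apply: (ub_le_sup h); right.
by rewrite sup_out // => -[_ ?].
Qed.

Lemma fsup_ub E e : (forall x, E x -> x <= 1) -> E e -> e <= fsup E.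
Proof.
move=> E1 Ee; apply: ub_le_sup; last by left.
by exists 1 => x [/E1 //|->]; exact: ler01.
Qed.

Lemma fsup_le E b : (forall x, E x -> x <= b) -> 0 <= b -> fsup E <= b.
Proof.
move=> Eb b0; apply: ge_sup; first by exists 0; right.
by move=> x [/Eb //|->].
Qed.

Lemma fsup_le_fsup E F : (forall y, F y -> y <= 1) ->
  (forall x, E x -> exists2 y, F y & x <= y) -> fsup E <= fsup F.
Proof.
move=> F1 EF; apply: fsup_le (fsup_ge0 F) => x /EF [y Fy xy].
by apply: le_trans xy _; exact: fsup_ub.
Qed.

Lemma finf_le1 E : finf E <= 1.
Proof.
rewrite /finf; case: (pselect (has_lbound (E `|` [set 1]))) => h.
  by apply: (ge_inf h); right.
by rewrite inf_out // => -[_ ?].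
Qed.

Lemma finf_lb E e : (forall x, E x -> 0 <= x) -> E e -> finf E <= e.
Proof.
move=> E0 Ee; apply: ge_inf; last by left.
by exists 0 => x [/E0 //|->]; exact: ler01.
Qed.

Lemma finf_ge E b : (forall x, E x -> b <= x) -> b <= 1 -> b <= finf E.
Proof.
move=> Eb b1; apply: lb_le_inf; first by exists 1; right.
by move=> x [/Eb //|->].
Qed.

Lemma finf_le_finf E F : (forall x, E x -> 0 <= x) ->
  (forall y, F y -> exists2 x, E x & x <= y) -> finf E <= finf F.
Proof.
move=> E0 FE; apply: finf_ge (finf_le1 E) => y /FE [x Ex xy].
by apply: le_trans _ xy; exact: finf_lb.
Qed.

End FuzzySupInf.

Section SubspacePreNeighbourhoods.
Variables (R : realType) (X : Type) (tau : set X -> R) (A : set X).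

Lemma preopen_le1 B : preopen tau B <= 1.
Proof. exact: finf_le1. Qed.

Lemma preopen_sub_le1 B : preopen_sub tau A B <= 1.
Proof. by apply: fsup_le => // _ [V _ <-]; exact: preopen_le1. Qed.

Lemma pnbhd_sub_le1 x U : pnbhd_sub tau A x U <= 1.
Proof. by apply: fsup_le => // _ [C _ <-]; exact: preopen_sub_le1. Qed.

Lemma preopen_le_preopen_sub B : preopen tau B <= preopen_sub tau A (B `&` A).
Proof. by apply: fsup_ub; [move=> _ [V _ <-]; exact: preopen_le1 | exists B]. Qed.

Lemma pnbhd_le_pnbhd_sub x U :
  A x -> pnbhd tau x U <= pnbhd_sub tau A x (U `&` A).
Proof.
move=> Ax; apply: fsup_le_fsup => [_ [C _ <-]|_ [B [Bx BU] <-]].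
  exact: preopen_sub_le1.
exists (preopen_sub tau A (B `&` A)); last exact: preopen_le_preopen_sub.
by exists (B `&` A) => //; split=> [|z [/BU]].
Qed.

End SubspacePreNeighbourhoods.

Theorem lemma3p3 (R : realType) (X : Type) (tau : set X -> R)
  (htau : fuzzifying_topology tau) (A : set X) :
  T2P tau <= T2P_sub tau A.
Proof.
apply: finf_le_finf => [_ [xy _ <-]|_ [[x y] [Ax Ay xy] <-]].
  exact: fsup_ge0.
exists (fsup [set Num.min (pnbhd tau x UV.1) (pnbhd tau y UV.2)
             | UV in [set UV : set X * set X | UV.1 `&` UV.2 = set0]]).
  by exists (x, y).
apply: fsup_le_fsup => [_ [UV _ <-]|_ [[U V] /= UV0 <-]].
  by rewrite ge_min pnbhd_sub_le1.
exists (Num.min (pnbhd_sub tau A x (U `&` A)) (pnbhd_sub tau A y (V `&` A))).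
  exists (U `&` A, V `&` A) => //=.
  by split; [exact: subIsetr | exact: subIsetr | rewrite setIACA UV0 set0I].
by rewrite le_min !ge_min !pnbhd_le_pnbhd_sub // orbT.
Qed.
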